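(* Let $k\ge1$, $t\ge 2$, and let $Cat_{k,t-1}$ be a set of representatives of the $\sim_2$-equivalence classes of $[GL(k,2)]^{t-1}$. Let $\overline{S_t}$ be the set of codes generated by the matrices $(I_k\mid B)$ with $B\in Cat_{k,t-1}$. Then every code in $\overline{S_t}$ is a $t$-CIS $[tk,k]$ code, and every $t$-CIS $[tk,k]$ code is equivalent to some code in $\overline{S_t}$; hence, removing equivalent codes from $\overline{S_t}$ and keeping one representative of each equivalence class yields a set $S_t$ of representatives of all inequivalent $t$-CIS codes of dimension $k$.
   Context: A binary linear $[tk,k]$ code is $t$-CIS if its coordinate set can be partitioned into $t$ pairwise disjoint information sets, an information set being a set of $k$ coordinates whose columns in a generator matrix are linearly independent. Two codes are equivalent if one is obtained from the other by a permutation of coordinates. $[GL(k,2)]^{t-1}$ is the set of $k\times k(t-1)$ binary matrices $(A_1\mid\cdots\mid A_{t-1})$ with all $A_j\in GL(k,2)$. For $A,B\in[GL(k,2)]^{t-1}$, $A\sim_2B$ iff $A=P_kBP_{k(t-1)}$ for some $k\times k$ permutation matrix $P_k$ and some $k(t-1)\times k(t-1)$ permutation matrix $P_{k(t-1)}$. $I_k$ is the identity matrix. *)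

From HB Require Import structures.
From mathcomp Require Import all_boot all_order all_algebra all_fingroup.
Set Implicit Arguments. Unset Strict Implicit. Unset Printing Implicit Defensive.
Import GRing.Theory.
Local Open Scope ring_scope.

Definition code_of (k n : nat) (G : 'M['F_2]_(k, n)) : {set 'rV['F_2]_n} :=
  [set v : 'rV['F_2]_n | (v <= G)%MS].

Definition is_gen_mx (k n : nat) (G : 'M['F_2]_(k, n)) (C : {set 'rV['F_2]_n}) : Prop :=
  \rank G = k /\ C = code_of G.

Definition cols (k n : nat) (G : 'M['F_2]_(k, n)) (I : {set 'I_n}) : 'M['F_2]_(k, #|I|) :=
  \matrix_(i < k, j < #|I|) G i (enum_val j).

Definition info_set (k n : nat) (G : 'M['F_2]_(k, n)) (I : {set 'I_n}) : bool :=
  (#|I| == k) && row_free (cols G I)^T.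

Definition is_tCIS (t k n : nat) (C : {set 'rV['F_2]_n}) : Prop :=
  exists G : 'M['F_2]_(k, n), is_gen_mx G C /\
    exists P : 'I_t -> {set 'I_n},
      (forall i j, i != j -> [disjoint P i & P j]) /\
      \bigcup_(i < t) P i = [set: 'I_n] /\
      (forall i, info_set G (P i)).

Definition code_equiv (n : nat) (C D : {set 'rV['F_2]_n}) : Prop :=
  exists s : 'S_n, D = [set col_perm s v | v in C].

Lemma blk_idx_proof (m k : nat) (j : 'I_m) (l : 'I_k) : (j * k + l < m * k)%N.
Proof.
case: j => j hj; case: l => l hl /=.
have h1 : (j * k + l < j * k + k)%N by rewrite ltn_add2l.
apply: (leq_trans h1); have -> : (j * k + k = j.+1 * k)%N by rewrite mulSn addnC.
by rewrite leq_mul2r hj orbT.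
Qed.

Definition blk_idx (m k : nat) (j : 'I_m) (l : 'I_k) : 'I_(m * k) :=
  Ordinal (blk_idx_proof j l).

Definition blk (k m : nat) (B : 'M['F_2]_(k, m * k)) (j : 'I_m) : 'M['F_2]_k :=
  \matrix_(i < k, l < k) B i (blk_idx j l).

Definition in_GLpow (k m : nat) (B : 'M['F_2]_(k, m * k)) : bool :=
  [forall j : 'I_m, blk B j \in unitmx].

Definition sim2 (k m : nat) (A B : 'M['F_2]_(k, m * k)) : Prop :=
  exists (s : 'S_k) (s' : 'S_(m * k)), A = perm_mx s *m B *m perm_mx s'.

Definition sim2_reps (k m : nat) (Cat : {set 'M['F_2]_(k, m * k)}) : Prop :=
  (forall B, B \in Cat -> in_GLpow B) /\
  (forall A B, A \in Cat -> B \in Cat -> sim2 A B -> A = B) /\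
  (forall A, in_GLpow A -> exists2 B, B \in Cat & sim2 A B).

(* \overline{S_t}: codes generated by (I_k | B), B in Cat; length k + (t-1)k = tk. *)
Definition Sbar (k m : nat) (Cat : {set 'M['F_2]_(k, m * k)}) : {set {set 'rV['F_2]_(k + m * k)}} :=
  [set code_of (row_mx 1%:M B) | B in Cat].

(* Every t-CIS code has a generator matrix whose t column blocks of size k are
   information sets; permuting coordinates so that these blocks become
   consecutive and multiplying on the left by the inverse of the first block
   gives the systematic form (I_k | B) with B in [GL(k,2)]^(t-1).  Replacing B
   by a ~_2-equivalent matrix P B Q only permutes coordinates again, since
   P^-1 (I_k | P B Q) = (P^-1 | B Q) is a column permutation of (I_k | B).
   Conversely, the blocks of (I_k | B) exhibit the t information sets.
   Picking one code per equivalence class in the finite set of these codes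
   yields S_t. *)
From mathcomp Require Import all_boot all_order all_algebra all_fingroup zify.
Set Implicit Arguments. Unset Strict Implicit. Unset Printing Implicit Defensive.
Import GRing.Theory.
Local Open Scope ring_scope.

Lemma exists_transversal (T : finType) (e : rel T) (X : {set T}) :
  reflexive e -> symmetric e -> transitive e ->
  exists S : {set T}, [/\ S \subset X,
    {in S &, forall x y, e x y -> x = y} &
    {in X, forall x, exists2 y, y \in S & e x y}].
Proof.
move=> e_refl e_sym e_trans.
pose rep x := odflt x [pick y in X | e x y].
have repP x : x \in X -> rep x \in X /\ e x (rep x).
  move=> xX; rewrite /rep; case: pickP => [y /andP[]//|/(_ x)] /=.
  by rewrite xX e_refl.
have rep_eq x y : y \in X -> e x y -> rep x = rep y.
  move=> yX exy; have exz z : e x z = e y z.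
    by apply/idP/idP => [|/(e_trans y x z exy)//]; apply: e_trans; rewrite e_sym.
  rewrite /rep (@eq_pick _ _ [pred z | (z \in X) && e y z]) => [|z /=]; last by rewrite exz.
  by case: pickP => //= /(_ y) /=; rewrite yX e_refl.
exists [set rep x | x in X]; split.
- by apply/subsetP => _ /imsetP[x xX ->]; case: (repP x xX).
- move=> _ _ /imsetP[x xX ->] /imsetP[y yX ->] e_rep; apply: (rep_eq _ _ yX).
  have [_ exr] := repP x xX; have [_ eyr] := repP y yX.
  by apply: e_trans exr (e_trans _ _ _ e_rep _); rewrite e_sym.
- by move=> x xX; exists (rep x); [apply: imset_f | case: (repP x xX)].
Qed.

Lemma tr_submx_cols (F : fieldType) k p q (M : 'M[F]_(k, p)) (N : 'M[F]_(k, q)) :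
  (forall c, exists l, forall i, M i c = N i l) -> (M^T <= N^T)%MS.
Proof.
move=> MN; apply/row_subP => c; have [l Ml] := MN c.
have -> : row c M^T = row l N^T by apply/rowP => i; rewrite !mxE Ml.
exact: row_sub.
Qed.

Lemma info_set_imset k n (G : 'M['F_2]_(k, n)) (f : 'I_k -> 'I_n) :
  injective f ->
  info_set G [set f l | l : 'I_k] = (\matrix_(i, l) G i (f l) \in unitmx).
Proof.
move=> f_inj; set I := [set f l | l : 'I_k]; set M := \matrix_(i, l) _.
have cardI : #|I| = k by rewrite card_imset ?card_ord.
have eq_tr : ((cols G I)^T == M^T)%MS.
  apply/andP; split; apply: tr_submx_cols.
    move=> c; have /imsetP[l _ El] := enum_valP c.
    by exists l => i; rewrite !mxE El.
  move=> l; have fl : f l \in I by apply: imset_f.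
  by exists (enum_rank_in fl (f l)) => i; rewrite !mxE enum_rankK_in.
rewrite /info_set /row_free (eqmx_rank eq_tr) cardI eqxx /=.
by rewrite -unitmx_tr -row_free_unit.
Qed.

Definition set_enum (T : finType) (I : {set T}) (k : nat) (hI : #|I| = k)
  (l : 'I_k) : T := enum_val (cast_ord (esym hI) l).

Lemma set_enum_inj (T : finType) (I : {set T}) k (hI : #|I| = k) :
  injective (set_enum hI).
Proof. by move=> l l' /enum_val_inj /cast_ord_inj. Qed.

Lemma imset_set_enum (T : finType) (I : {set T}) k (hI : #|I| = k) :
  [set set_enum hI l | l : 'I_k] = I.
Proof.
apply/setP => x; apply/imsetP/idP => [[l _ ->]|xI]; first exact: enum_valP.
by exists (cast_ord hI (enum_rank_in xI x)); rewrite // /set_enum cast_ordK enum_rankK_in.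
Qed.

Lemma code_ofMl k n (M : 'M['F_2]_k) (X : 'M['F_2]_(k, n)) :
  M \in unitmx -> code_of (M *m X) = code_of X.
Proof.
by move=> M_unit; apply/setP => v; rewrite !inE (eqmxMfull X) ?row_full_unit.
Qed.

Lemma code_of_row_mx_unitl k p (A : 'M['F_2]_k) (B : 'M['F_2]_(k, p)) :
  A \in unitmx -> code_of (row_mx A B) = code_of (row_mx 1%:M (invmx A *m B)).
Proof.
move=> A_unit; have Ainv_unit : invmx A \in unitmx by rewrite unitmx_inv.
by rewrite -(code_ofMl (row_mx A B) Ainv_unit) mul_mx_row mulVmx.
Qed.

Lemma code_of_col_perm k n (s : 'S_n) (X : 'M['F_2]_(k, n)) :
  code_of (col_perm s X) = [set col_perm s v | v in code_of X].
Proof.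
apply/setP => w; rewrite inE; apply/idP/imsetP.
  move=> w_sub; exists (col_perm s^-1 w); last by rewrite -col_permM mulgV col_perm1.
  rewrite inE; have := submxMr (perm_mx s) w_sub.
  by rewrite col_permE -mulmxA -perm_mxM mulVg perm_mx1 mulmx1 col_permE invgK.
by move=> [v]; rewrite inE => v_sub ->; rewrite !col_permE; apply: submxMr.
Qed.

Lemma col_perm_row_mx (R : Type) k p q (a : 'S_p) (b : 'S_q) :
  exists s : 'S_(p + q), forall (X : 'M[R]_(k, p)) (Y : 'M[R]_(k, q)),
    col_perm s (row_mx X Y) = row_mx (col_perm a X) (col_perm b Y).
Proof.
pose f x := match split x with inl i => lshift q (a i) | inr j => rshift p (b j) end.
have f_inj : injective f.
  move=> x y; rewrite /f -{2}(splitK x) -{2}(splitK y).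
  case: (split x) => [i|i]; case: (split y) => [j|j] /= => E.
  - by move/lshift_inj: E => /perm_inj ->.
  - by move/eqP: E; rewrite eq_lrshift.
  - by move/eqP: E; rewrite eq_rlshift.
  - by move/rshift_inj: E => /perm_inj ->.
exists (perm f_inj) => X Y; apply/matrixP => i x; rewrite mxE permE /f.
by rewrite -(splitK x); case: (split x) => j; rewrite unsplitK /= ?row_mxEl ?row_mxEr mxE.
Qed.

Definition code_equivb n (C D : {set 'rV['F_2]_n}) : bool :=
  [exists s : 'S_n, D == [set col_perm s v | v in C]].

Lemma code_equivP n (C D : {set 'rV['F_2]_n}) :
  reflect (code_equiv C D) (code_equivb C D).
Proof. by apply: (iffP existsP) => -[s /eqP E]; exists s. Qed.

Lemma code_equiv_refl n (C : {set 'rV['F_2]_n}) : code_equiv C C.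
Proof.
by exists 1%g; rewrite (eq_imset (g := id)) ?imset_id // => v; apply: col_perm1.
Qed.

Lemma code_equiv_trans n (C D E : {set 'rV['F_2]_n}) :
  code_equiv C D -> code_equiv D E -> code_equiv C E.
Proof.
move=> [s ->] [r ->]; exists (r * s)%g.
by rewrite -imset_comp; apply: eq_imset => v; rewrite /= col_permM.
Qed.

Lemma code_equiv_sym n (C D : {set 'rV['F_2]_n}) : code_equiv C D -> code_equiv D C.
Proof.
move=> [s ->]; exists s^-1%g; rewrite -imset_comp (eq_imset (g := id)) ?imset_id //.
by move=> v; rewrite /= -col_permM mulVg col_perm1.
Qed.

Lemma code_equivb_refl n : reflexive (@code_equivb n).
Proof. by move=> C; apply/code_equivP/code_equiv_refl. Qed.

Lemma code_equivb_sym n : symmetric (@code_equivb n).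
Proof. by move=> C D; apply/code_equivP/code_equivP => /code_equiv_sym. Qed.

Lemma code_equivb_trans n : transitive (@code_equivb n).
Proof.
by move=> D C E /code_equivP CD /code_equivP DE; apply/code_equivP/(code_equiv_trans CD).
Qed.

Lemma code_equiv_sim2 k m (A B : 'M['F_2]_(k, m * k)) :
  sim2 A B -> code_equiv (code_of (row_mx 1%:M B)) (code_of (row_mx 1%:M A)).
Proof.
move=> [s [s' ->]]; have [r r_row] := col_perm_row_mx 'F_2 k s s'^-1.
exists r; rewrite -code_of_col_perm r_row -(code_ofMl _ (unitmx_perm _ s^-1)).
congr code_of; rewrite mul_mx_row !col_permE invgK mul1mx mulmx1 !mulmxA.
by rewrite -perm_mxM mulVg perm_mx1 mul1mx.
Qed.

Lemma blkMl k m (A : 'M['F_2]_k) (B : 'M['F_2]_(k, m * k)) j :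
  blk (A *m B) j = A *m blk B j.
Proof. by apply/matrixP => i l; rewrite !mxE; apply: eq_bigr => r _; rewrite !mxE. Qed.

Section ColumnBlocks.
Variables k m : nat.
Local Notation n := (k + m * k)%N.

Lemma cblk_idx_proof (j : 'I_m.+1) (l : 'I_k) : (j * k + l < n)%N.
Proof. have := ltn_ord j; have := ltn_ord l; nia. Qed.

Definition cblk_idx j l : 'I_n := Ordinal (cblk_idx_proof j l).

Lemma cblk_idx_inj j : injective (cblk_idx j).
Proof. by move=> l l' /(congr1 val) /= /addnI /val_inj. Qed.

Definition cblk (G : 'M['F_2]_(k, n)) j : 'M['F_2]_k :=
  \matrix_(i, l) G i (cblk_idx j l).

Lemma cblk0 G : cblk G ord0 = lsubmx G.
Proof.
apply/matrixP => i l; rewrite !mxE; congr (G i _).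
by apply: val_inj; rewrite /= mul0n.
Qed.

Lemma cblkS G j : cblk G (lift ord0 j) = blk (rsubmx G) j.
Proof.
apply/matrixP => i l; rewrite !mxE; congr (G i _).
by apply: val_inj; rewrite /= /bump /= add1n mulSn addnA.
Qed.

Lemma cblk_row_mx1_unit B : in_GLpow B -> forall j, cblk (row_mx 1%:M B) j \in unitmx.
Proof.
move=> /forallP B_GL j; case: (unliftP ord0 j) => [j'|] ->.
  by rewrite cblkS row_mxKr.
by rewrite cblk0 row_mxKl unitmx1.
Qed.

Variable k_gt0 : (0 < k)%N.

Lemma cblk_num_proof (x : 'I_n) : (x %/ k < m.+1)%N.
Proof. by rewrite ltn_divLR // mulSn. Qed.

Definition cblk_num x : 'I_m.+1 := Ordinal (cblk_num_proof x).
Definition cblk_off (x : 'I_n) : 'I_k := Ordinal (ltn_pmod x k_gt0).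

Lemma cblk_idx_num_off x : cblk_idx (cblk_num x) (cblk_off x) = x.
Proof. by apply: val_inj; rewrite /= -divn_eq. Qed.

Lemma cblk_num_idx j l : cblk_num (cblk_idx j l) = j.
Proof. by apply: val_inj; rewrite /= divnMDl // divn_small // addn0. Qed.

Lemma cblk_off_idx j l : cblk_off (cblk_idx j l) = l.
Proof. by apply: val_inj; rewrite /= modnMDl modn_small. Qed.

Lemma is_tCIS_cblk_unit G :
  (forall j, cblk G j \in unitmx) -> is_tCIS m.+1 k (code_of G).
Proof.
move=> G_unit; exists G; split.
  split=> //; apply/eqP; rewrite eqn_leq rank_leq_row /=.
  have : ((cblk G ord0)^T <= G^T)%MS.
    by apply: tr_submx_cols => l; exists (cblk_idx ord0 l) => i; rewrite mxE.
  by move/mxrankS; rewrite !mxrank_tr mxrank_unit.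
exists (fun j => [set cblk_idx j l | l : 'I_k]); split; [|split].
- move=> j j' neq_jj'; rewrite -setI_eq0; apply/eqP/setP => x; rewrite !inE.
  apply/negP => /andP[/imsetP[l _ ->] /imsetP[l' _ /(congr1 cblk_num)]].
  by rewrite !cblk_num_idx => eq_jj'; rewrite eq_jj' eqxx in neq_jj'.
- apply/setP => x; rewrite inE; apply/bigcupP; exists (cblk_num x) => //.
  by apply/imsetP; exists (cblk_off x); rewrite ?cblk_idx_num_off.
- by move=> j; rewrite info_set_imset; [apply: G_unit | apply: cblk_idx_inj].
Qed.

Lemma cblk_unit_of_info_partition G (P : 'I_m.+1 -> {set 'I_n}) :
  (forall i j, i != j -> [disjoint P i & P j]) -> (forall j, info_set G (P j)) ->
  exists s : 'S_n, forall j, cblk (col_perm s G) j \in unitmx.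
Proof.
move=> P_disj P_info.
have cardP j : #|P j| = k by have /andP[/eqP] := P_info j.
pose f x := set_enum (cardP (cblk_num x)) (cblk_off x).
have fP x : f x \in P (cblk_num x).
  by rewrite -[in P _](imset_set_enum (cardP (cblk_num x))); apply: imset_f.
have f_inj : injective f.
  move=> x y fxy; have eq_num : cblk_num x = cblk_num y.
    apply/eqP; apply: contraTT (fP y) => /P_disj /disjointFr -> //.
    by rewrite -fxy fP.
  move: fxy; rewrite /f eq_num => /set_enum_inj eq_off.
  by rewrite -(cblk_idx_num_off x) -(cblk_idx_num_off y) eq_num eq_off.
exists (perm f_inj) => j.
have -> : cblk (col_perm (perm f_inj) G) j = \matrix_(i, l) G i (set_enum (cardP j) l).
  by apply/matrixP => i l; rewrite !mxE permE /f cblk_num_idx cblk_off_idx.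
have := P_info j; rewrite -{1}(imset_set_enum (cardP j)) info_set_imset //.
exact: set_enum_inj.
Qed.

End ColumnBlocks.

Lemma tCIS_equiv_Sbar k m (k_gt0 : (0 < k)%N) (Cat : {set 'M['F_2]_(k, m * k)}) :
  sim2_reps Cat -> forall C : {set 'rV['F_2]_(k + m * k)},
  is_tCIS m.+1 k C -> exists2 D, D \in Sbar Cat & code_equiv C D.
Proof.
move=> [_ [_ Cat_cover]] _ [G [[_ ->] [P [P_disj [_ P_info]]]]].
have [s G'_unit] := cblk_unit_of_info_partition k_gt0 P_disj P_info.
set G' := col_perm s G.
have A_unit : lsubmx G' \in unitmx by rewrite -cblk0; apply: G'_unit.
pose B' := invmx (lsubmx G') *m rsubmx G'.
have B'_GL : in_GLpow B'.
  apply/forallP => j; rewrite blkMl unitmx_mul unitmx_inv A_unit -cblkS.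
  exact: G'_unit.
have [B B_Cat B'B] := Cat_cover _ B'_GL.
exists (code_of (row_mx 1%:M B)); first exact: imset_f.
apply: code_equiv_trans (code_equiv_sym (code_equiv_sim2 B'B)).
exists s; rewrite -code_of_col_perm -/G' -[in RHS](hsubmxK G').
by rewrite code_of_row_mx_unitl.
Qed.

Theorem proposition9 (k t : nat) (hk : (1 <= k)%N) (ht : (2 <= t)%N)
  (Cat : {set 'M['F_2]_(k, (t - 1) * k)}) (hCat : sim2_reps Cat) :
  (forall C, C \in Sbar Cat -> is_tCIS t k C) /\
  (forall C : {set 'rV['F_2]_(k + (t - 1) * k)},
     is_tCIS t k C -> exists2 D, D \in Sbar Cat & code_equiv C D) /\
  (exists S : {set {set 'rV['F_2]_(k + (t - 1) * k)}},
     S \subset Sbar Cat /\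
     (forall C D, C \in S -> D \in S -> code_equiv C D -> C = D) /\
     (forall C, is_tCIS t k C -> exists2 D, D \in S & code_equiv C D)).
Proof.
case: t ht Cat hCat => [|m] // _; rewrite subSS subn0 => Cat hCat.
have tCIS_Sbar := tCIS_equiv_Sbar hk hCat.
have [S [S_sub S_inequiv S_cover]] := exists_transversal (Sbar Cat)
  (@code_equivb_refl _) (@code_equivb_sym _) (@code_equivb_trans _).
split; [|split=> //].
  move=> _ /imsetP[B /hCat.1 B_GL ->].
  by apply: (@is_tCIS_cblk_unit _ _ hk); apply: cblk_row_mx1_unit.
exists S; split=> //; split.
  by move=> C D CS DS /code_equivP; apply: S_inequiv.
move=> C /tCIS_Sbar[D /S_cover[E ES /code_equivP DE] CD].
by exists E => //; apply: code_equiv_trans CD DE.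
Qed.
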